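(* A set $\mathcal{O}$ of upwards-closed modalities is decomposable if and only if, for all $r,r'\in TT\mathbf{1}$, whenever $r\preccurlyeq r'$, then for all $o\in\mathcal{O}$, $\mu r\in o(\{*\})$ implies $\mu r'\in o(\{*\})$.
   Context: $\Sigma$ is a signature of effect operations with arities $\alpha^n\to\alpha$, $\mathbf{N}\times\alpha^n\to\alpha$, $\alpha^{\mathbf{N}}\to\alpha$ or $\mathbf{N}\times\alpha^{\mathbf{N}}\to\alpha$. $TX$ is the set of possibly infinite labelled trees with leaves $\bot$ or elements of $X$ and internal nodes labelled by operations (or $\sigma_m$, $m\in\mathbb{N}$) with children according to arity; $t\le t'$ iff $t$ is obtained from $t'$ by replacing subtrees with $\bot$. $\mu:TTX\to TX$ is the monad multiplication, replacing each leaf of a tree of trees by that tree. $\mathbf{1}=\{*\}$. A set $\mathcal{O}$ of modalities is given with $[\![o]\!]\subseteq T\mathbf{1}$; upwards closed means $[\![o]\!]$ is upward closed under $\le$. $t[\in P]\in T\mathbf{1}$ replaces leaves in $P$ by $*$ and other $X$-leaves by $\bot$; $o(A)=\{t\in TX\mid t[\in A]\in[\![o]\!]\}$. $\mathcal{T}$ is the least class of formulas containing $o(\top),o(\bot)$ ($o\in\mathcal{O}$) closed under arbitrary $\bigvee,\bigwedge$, with $[\![o(\top)]\!]=o(\{*\})$, $[\![o(\bot)]\!]=o(\emptyset)$, unions/intersections. On $T\mathbf{1}$: $t\trianglelefteq t'$ iff $\forall\Phi\in\mathcal{T}$, $t\in[\![\Phi]\!]\Rightarrow t'\in[\![\Phi]\!]$.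 On $TT\mathbf{1}$: $r\preccurlyeq r'$ iff $\forall o\,\forall\Phi\in\mathcal{T}$, $r\in o([\![\Phi]\!])\Rightarrow r'\in o([\![\Phi]\!])$. $\mathcal{O}$ is decomposable if for all $r,r'\in TT\mathbf{1}$, $r\preccurlyeq r'$ implies $\mu r\trianglelefteq\mu r'$. *)

From Stdlib Require Import ClassicalEpsilon.
Set Implicit Arguments.

(* The four admissible arity shapes:
   AFin n    : alpha^n -> alpha
   ANatFin n : N x alpha^n -> alpha
   ANat      : alpha^N -> alpha
   ANatNat   : N x alpha^N -> alpha *)
Inductive arity := AFin (n : nat) | ANatFin (n : nat) | ANat | ANatNat.

Definition param_ty (a : arity) : Type :=
  match a with AFin _ | ANat => unit | ANatFin _ | ANatNat => nat end.

Definition child_ty (a : arity) : Type :=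
  match a with AFin n | ANatFin n => {i : nat | i < n} | ANat | ANatNat => nat end.

(* A signature: operation symbols with their arities; sig_ar m is the
   arity of the extra node labels sigma_m (m in N). *)
Record signature := Signature {
  Op : Type;
  op_ar : Op -> arity;
  sig_ar : nat -> arity
}.

Inductive label (S : signature) : Type :=
| LOp (f : Op S) (p : param_ty (op_ar S f))
| LSig (m : nat).

Definition children (S : signature) (l : label S) : Type :=
  match l with
  | LOp _ f _ => child_ty (op_ar S f)
  | LSig _ m => child_ty (sig_ar S m)
  end.

CoInductive tree (S : signature) (X : Type) : Type :=
| Bot
| Leaf (x : X)
| Node (l : label S) (k : children l -> tree S X).
Arguments Bot {S X}.
Arguments Leaf {S X} x.
Arguments Node {S X} l k.

CoInductive tle {S : signature} {X : Type} : tree S X -> tree S X -> Prop :=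
| tle_bot t : tle Bot t
| tle_leaf x : tle (Leaf x) (Leaf x)
| tle_node l k k' : (forall i, tle (k i) (k' i)) -> tle (Node l k) (Node l k').

CoFixpoint mu {S : signature} {X : Type} (r : tree S (tree S X)) : tree S X :=
  match r with
  | Bot => Bot
  | Leaf t => t
  | Node l k => Node l (fun i => mu (k i))
  end.

CoFixpoint tin {S : signature} {X : Type} (P : X -> Prop) (t : tree S X)
  : tree S unit :=
  match t with
  | Bot => Bot
  | Leaf x => if excluded_middle_informative (P x) then Leaf tt else Bot
  | Node l k => Node l (fun i => tin P (k i))
  end.

Definition modA {S : signature} {X : Type} (semo : tree S unit -> Prop)
  (A : X -> Prop) : tree S X -> Prop :=
  fun t => semo (tin A t).

Definition upward_closed {S : signature} (semo : tree S unit -> Prop) : Prop :=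
  forall t t', tle t t' -> semo t -> semo t'.

Inductive formula (O : Type) : Type :=
| FTop (o : O)
| FBot (o : O)
| FOr (I : Type) (F : I -> formula O)
| FAnd (I : Type) (F : I -> formula O).

Fixpoint fsem {S : signature} {O : Type} (sem : O -> tree S unit -> Prop)
  (phi : formula O) : tree S unit -> Prop :=
  match phi with
  | FTop o => modA (sem o) (fun _ : unit => True)
  | FBot o => modA (sem o) (fun _ : unit => False)
  | FOr F => fun t => exists i, fsem sem (F i) t
  | FAnd F => fun t => forall i, fsem sem (F i) t
  end.

Definition tri {S : signature} {O : Type} (sem : O -> tree S unit -> Prop)
  (t t' : tree S unit) : Prop :=
  forall phi : formula O, fsem sem phi t -> fsem sem phi t'.

Definition prec {S : signature} {O : Type} (sem : O -> tree S unit -> Prop)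
  (r r' : tree S (tree S unit)) : Prop :=
  forall (o : O) (phi : formula O),
    modA (sem o) (fsem sem phi) r -> modA (sem o) (fsem sem phi) r'.

Definition decomposable {S : signature} {O : Type}
  (sem : O -> tree S unit -> Prop) : Prop :=
  forall r r' : tree S (tree S unit), prec sem r r' -> tri sem (mu r) (mu r').

(** Only the atoms [o(⊥)] need an argument.  Since [t ∈ o(∅)] iff
    [t[∈∅] ∈ o({*})], applying [-[∈∅]] to every inner tree of [r : TT1] turns
    [μ r ∈ o(∅)] into [μ r₀ ∈ o({*})] for the image [r₀]; and [r ≼ r'] implies
    [r₀ ≼ r'₀] because [s[∈∅] ∈ ⟦φ⟧] iff [s ∈ ⟦φ̂⟧], where [φ̂] replaces every
    [o(⊤)] of [φ] by [o(⊥)].  The identities between trees hold only up to bisimilarity,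
    which the upward closure of the modalities absorbs. *)

From Stdlib Require Import ClassicalEpsilon.

Unset Implicit Arguments.

Section Trees.

Context {S : signature}.

Definition unfold_tree {X : Type} (t : tree S X) : tree S X :=
  match t with Bot => Bot | Leaf x => Leaf x | Node l k => Node l k end.

Lemma unfold_treeE {X : Type} (t : tree S X) : t = unfold_tree t.
Proof. destruct t; reflexivity. Qed.

CoFixpoint tmap {X Y : Type} (f : X -> Y) (t : tree S X) : tree S Y :=
  match t with
  | Bot => Bot
  | Leaf x => Leaf (f x)
  | Node l k => Node l (fun i => tmap f (k i))
  end.

Lemma tin_bot {X : Type} (P : X -> Prop) : tin P (@Bot S X) = Bot.
Proof. rewrite (unfold_treeE (tin P Bot)); reflexivity. Qed.

Lemma tin_leaf {X : Type} (P : X -> Prop) (x : X) :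
  tin P (@Leaf S X x) = if excluded_middle_informative (P x) then Leaf tt else Bot.
Proof.
  rewrite (unfold_treeE (tin P (Leaf x))); simpl.
  destruct excluded_middle_informative; reflexivity.
Qed.

Lemma tin_node {X : Type} (P : X -> Prop) (l : label S) (k : children l -> tree S X) :
  tin P (Node l k) = Node l (fun i => tin P (k i)).
Proof. rewrite (unfold_treeE (tin P (Node l k))); reflexivity. Qed.

Lemma mu_bot {X : Type} : mu (@Bot S (tree S X)) = Bot.
Proof. rewrite (unfold_treeE (mu Bot)); reflexivity. Qed.

Lemma mu_leaf {X : Type} (t : tree S X) : mu (Leaf t) = t.
Proof. rewrite (unfold_treeE (mu (Leaf t))); simpl; destruct t; reflexivity. Qed.

Lemma mu_node {X : Type} (l : label S) (k : children l -> tree S (tree S X)) :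
  mu (Node l k) = Node l (fun i => mu (k i)).
Proof. rewrite (unfold_treeE (mu (Node l k))); reflexivity. Qed.

Lemma tmap_bot {X Y : Type} (f : X -> Y) : tmap f (@Bot S X) = Bot.
Proof. rewrite (unfold_treeE (tmap f Bot)); reflexivity. Qed.

Lemma tmap_leaf {X Y : Type} (f : X -> Y) (x : X) : tmap f (@Leaf S X x) = Leaf (f x).
Proof. rewrite (unfold_treeE (tmap f (Leaf x))); reflexivity. Qed.

Lemma tmap_node {X Y : Type} (f : X -> Y) (l : label S) (k : children l -> tree S X) :
  tmap f (Node l k) = Node l (fun i => tmap f (k i)).
Proof. rewrite (unfold_treeE (tmap f (Node l k))); reflexivity. Qed.

CoInductive tbisim {X : Type} : tree S X -> tree S X -> Prop :=
| tbisim_bot : tbisim Bot Bot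
| tbisim_leaf x : tbisim (Leaf x) (Leaf x)
| tbisim_node l k k' : (forall i, tbisim (k i) (k' i)) -> tbisim (Node l k) (Node l k').

Lemma tbisim_refl {X : Type} : forall t : tree S X, tbisim t t.
Proof. cofix CIH; intros [| x | l k]; constructor; intros i; apply CIH. Qed.

Lemma tbisim_sym {X : Type} : forall t t' : tree S X, tbisim t t' -> tbisim t' t.
Proof.
  cofix CIH; intros t t' []; constructor; intros i; apply CIH; auto.
Qed.

Lemma tbisim_tle {X : Type} : forall t t' : tree S X, tbisim t t' -> tle t t'.
Proof.
  cofix CIH; intros t t' []; constructor; intros i; apply CIH; auto.
Qed.

Lemma upward_closed_tbisim (semo : tree S unit -> Prop) (t t' : tree S unit) :
  upward_closed semo -> tbisim t t' -> semo t <-> semo t'.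
Proof.
  intros Hup Htt'; split; apply Hup, tbisim_tle; auto using tbisim_sym.
Qed.

Lemma tin_tbisim {X : Type} (P : X -> Prop) :
  forall t t' : tree S X, tbisim t t' -> tbisim (tin P t) (tin P t').
Proof.
  cofix CIH; intros t t' [| x | l k k' Hk].
  - rewrite !tin_bot; constructor.
  - apply tbisim_refl.
  - rewrite !tin_node; constructor; intros i; apply CIH, Hk.
Qed.

Lemma tin_tin {X : Type} (P : X -> Prop) (Q : unit -> Prop) (R : X -> Prop) :
  (forall x, P x /\ Q tt <-> R x) ->
  forall t : tree S X, tbisim (tin Q (tin P t)) (tin R t).
Proof.
  intros HPQR; cofix CIH; intros [| x | l k].
  - rewrite !tin_bot; constructor.
  - rewrite !tin_leaf.
    destruct (excluded_middle_informative (P x)), (excluded_middle_informative (R x));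
      rewrite ?tin_leaf, ?tin_bot;
      try destruct (excluded_middle_informative (Q tt)); try constructor;
      firstorder.
  - rewrite !tin_node; constructor; intros i; apply CIH.
Qed.

Lemma tin_tmap {X Y : Type} (f : X -> Y) (P : Y -> Prop) (Q : X -> Prop) :
  (forall x, P (f x) <-> Q x) ->
  forall t : tree S X, tbisim (tin P (tmap f t)) (tin Q t).
Proof.
  intros HPQ; cofix CIH; intros [| x | l k].
  - rewrite tmap_bot, !tin_bot; constructor.
  - rewrite tmap_leaf, !tin_leaf.
    destruct (excluded_middle_informative (P (f x))), (excluded_middle_informative (Q x));
      constructor || firstorder.
  - rewrite tmap_node, !tin_node; constructor; intros i; apply CIH.
Qed.

Lemma mu_tmap_tin {X : Type} (P : X -> Prop) :
  forall r : tree S (tree S X), tbisim (mu (tmap (tin P) r)) (tin P (mu r)).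
Proof.
  cofix CIH; intros [| t | l k].
  - rewrite tmap_bot, !mu_bot, tin_bot; constructor.
  - rewrite tmap_leaf, !mu_leaf; apply tbisim_refl.
  - rewrite tmap_node, !mu_node, tin_node; constructor; intros i; apply CIH.
Qed.

End Trees.

Section Modalities.

Context {S : signature} {O : Type} (sem : O -> tree S unit -> Prop).
Hypothesis Hup : forall o : O, upward_closed (sem o).

Definition tin_empty {X : Type} : tree S X -> tree S unit := tin (fun _ => False).

Fixpoint erase_top (phi : formula O) : formula O :=
  match phi with
  | FTop o | FBot o => FBot o
  | FOr F => FOr (fun i => erase_top (F i))
  | FAnd F => FAnd (fun i => erase_top (F i))
  end.

Lemma fsem_tin_empty (phi : formula O) (t : tree S unit) :
  fsem sem phi (tin_empty t) <-> fsem sem (erase_top phi) t.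
Proof.
  revert t; induction phi as [o | o | I F IH | I F IH]; intros t;
    simpl; unfold modA, tin_empty.
  1, 2: apply upward_closed_tbisim; [apply Hup | apply tin_tin; tauto].
  - split; intros [i Hi]; exists i; apply IH, Hi.
  - split; intros Hi i; apply IH, Hi.
Qed.

Lemma modA_tmap_tin_empty (o : O) (phi : formula O) (r : tree S (tree S unit)) :
  modA (sem o) (fsem sem phi) (tmap tin_empty r) <->
  modA (sem o) (fsem sem (erase_top phi)) r.
Proof.
  unfold modA; apply upward_closed_tbisim;
    [apply Hup | apply tin_tmap, fsem_tin_empty].
Qed.

Lemma prec_tmap_tin_empty (r r' : tree S (tree S unit)) :
  prec sem r r' -> prec sem (tmap tin_empty r) (tmap tin_empty r').
Proof.
  intros Hrr' o phi; rewrite !modA_tmap_tin_empty; apply Hrr'.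
Qed.

Lemma modA_empty_mu (o : O) (r : tree S (tree S unit)) :
  modA (sem o) (fun _ => False) (mu r) <->
  modA (sem o) (fun _ => True) (mu (tmap tin_empty r)).
Proof.
  unfold modA; transitivity (sem o (tin (fun _ => True) (tin_empty (mu r)))).
  - symmetry; apply upward_closed_tbisim; [apply Hup | apply tin_tin; tauto].
  - apply upward_closed_tbisim;
      [apply Hup | apply tin_tbisim, tbisim_sym, mu_tmap_tin].
Qed.

End Modalities.

Theorem lemma4p16 (S : signature) (O : Type) (sem : O -> tree S unit -> Prop)
  (Hup : forall o : O, upward_closed (sem o)) :
  decomposable sem <->
  (forall r r' : tree S (tree S unit), prec sem r r' ->
     forall o : O, modA (sem o) (fun _ : unit => True) (mu r) ->
                   modA (sem o) (fun _ : unit => True) (mu r')).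
Proof.
  split.
  - intros Hdec r r' Hrr' o; exact (Hdec r r' Hrr' (FTop o)).
  - intros Htop r r' Hrr' phi.
    induction phi as [o | o | I F IH | I F IH]; simpl.
    + apply Htop, Hrr'.
    + rewrite !(modA_empty_mu sem Hup).
      apply Htop, (prec_tmap_tin_empty sem Hup), Hrr'.
    + intros [i Hi]; exists i; apply IH, Hi.
    + intros Hi i; apply IH, Hi.
Qed.
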